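(* Let $\mathsf P$ be a network coding problem, $q$ a prime power, and $h\in\mathcal H[\mathcal S\cup\mathcal E]$ a $q$-representable function with $h\in\mathcal C_I(\mathsf P)\cap\mathcal C_T(\mathsf P)\cap\mathcal C_D(\mathsf P)$. Then the rate-capacity tuple $(\lambda,\omega)=\mathrm{proj}_{\mathsf P}[h]$ is $0$-achievable by $q$-linear network codes (i.e. $0$-achievable subject to the $q$-linearity constraint).
   Context: A network is $\mathsf G=(\mathcal V,\mathcal E)$, $\mathcal V$ a finite set of nodes, $\mathcal E$ a finite set of hyperedges, each $e$ with tail $\mathrm{tail}(e)\in\mathcal V$ and head $\mathrm{head}(e)\subseteq\mathcal V$, without directed cycles. A connection constraint $\mathsf M=(\mathcal S,O,D)$: finite source index set $\mathcal S$, $O:\mathcal S\to2^{\mathcal V}$ (where source $s$ is available), $D:\mathcal S\to2^{\mathcal V}$ (sinks of $s$). $\mathsf P=(\mathsf G,\mathsf M)$. Sources are imaginary edges with $\mathrm{head}(s)=O(s)$; $\mathrm{in}(e)=\{f\in\mathcal S\cup\mathcal E:\mathrm{tail}(e)\in\mathrm{head}(f)\}$, $\mathrm{in}(u)=\{f\in\mathcal S\cup\mathcal E:u\in\mathrm{head}(f)\}$. A $q$-linear network code is a family of random variables $\{Y_f:f\in\mathcal S\cup\mathcal E\}$ where each $Y_s$ is a row vector over $GF(q)$ with entries independent and uniform over $GF(q)$, the $Y_s$ are mutually independent, and each $Y_e$ is a row vector over $GF(q)$ that is a $GF(q)$-linear function of $(Y_f:f\in\mathrm{in}(e))$. $\mathrm{SP}(X)$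 is the support of $X$. A rate-capacity tuple $(\lambda,\omega)$ ($\lambda:\mathcal S\to\mathbb R_{\ge0}$, $\omega:\mathcal E\to\mathbb R_{\ge0}$) is $0$-achievable by $q$-linear network codes if there exist $q$-linear network codes $\{Y^n_f\}$ and $c_n>0$ with $\lim_nc_n\log|\mathrm{SP}(Y^n_s)|\ge\lambda(s)$, $\lim_nc_n\log|\mathrm{SP}(Y^n_e)|\le\omega(e)$, and $H(Y^n_s\mid Y^n_f,f\in\mathrm{in}(u))=0$ for all $n$, $s$, $u\in D(s)$. $\mathcal H[\mathcal S\cup\mathcal E]$ is the set of real functions on subsets of $\mathcal S\cup\mathcal E$, $h(\alpha\mid\beta)=h(\alpha\cup\beta)-h(\beta)$. $h$ is $q$-representable if there are subspaces $\mathbb U_i$ ($i\in\mathcal S\cup\mathcal E$) of a finite-dimensional $GF(q)$-vector space with $h(\alpha)=\dim\langle\mathbb U_i:i\in\alpha\rangle$ for all $\alpha$. $\mathcal C_I(\mathsf P)=\{h:h(\mathcal S)=\sum_sh(s)\}$, $\mathcal C_T(\mathsf P)=\{h:h(e\mid\mathrm{in}(e))=0\ \forall e\in\mathcal E\}$, $\mathcal C_D(\mathsf P)=\{h:h(s\mid\mathrm{in}(u))=0\ \forall s,u\in D(s)\}$. $\mathrm{proj}_{\mathsf P}[h]=(h(s),s\in\mathcal S;h(e),e\in\mathcal E)$. *)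

From HB Require Import structures.
From mathcomp Require Import all_boot all_order all_algebra.
From mathcomp Require Import all_classical all_reals all_analysis.
From mathcomp Require Import Rstruct Rstruct_topology.
Set Implicit Arguments. Unset Strict Implicit. Unset Printing Implicit Defensive.
Import Order.TTheory GRing.Theory Num.Theory.
Import numFieldNormedType.Exports.
Local Open Scope classical_set_scope.
Local Open Scope ring_scope.

Notation R := Rdefinitions.R.

Section Network.
Variables (V E S : finType) (tail : E -> V) (head : E -> {set V})
  (O D : S -> {set V}).

(* sources are imaginary edges with head(s) = O(s) *)
Definition hd (f : S + E) : {set V} :=
  match f with inl s => O s | inr e => head e end.

Definition in_node (u : V) : {set S + E} := [set f | u \in hd f].
Definition in_edge (e : E) : {set S + E} := in_node (tail e).

Definition step : rel V := fun u v => [exists e, (tail e == u) && (v \in head e)].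
Definition acyclic : Prop := forall u v, step u v -> ~~ connect step v u.

(* conditional entropy H(X | Y) (natural log) of random variables defined on a
   finite sample space Om equipped with the uniform probability:
   H(X|Y) = E[ log (P(Y = Y w) / P(X = X w, Y = Y w)) ]. *)
Definition condH (Om : finType) (A B : eqType) (X : Om -> A) (Y : Om -> B) : R :=
  \sum_(w : Om) (#|Om|%:R)^-1 *
     ln (#|[set w' | Y w' == Y w]%SET|%:R /
         #|[set w' | (X w' == X w) && (Y w' == Y w)]%SET|%:R).

Section Code.
Variable F : finFieldType.

(* sample space: the values of all source messages (row vectors over F) *)
Definition Omega (k : S + E -> nat) := {dffun forall s : S, 'rV[F]_(k (inl s))}.

(* A q-linear network code (q = #|F|): Y_s is the s-th coordinate of the uniform
   sample point (so the Y_s are independent, with i.i.d. uniform entries), and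
   each Y_e is an F-linear function of (Y_f : f in in(e)). *)
Record lincode := LinCode {
  cdim : S + E -> nat;
  Yv : forall f, Omega cdim -> 'rV[F]_(cdim f);
  Yv_src : forall s w, Yv (inl s) w = w s;
  Yv_lin : forall e, exists M : forall f, 'M[F]_(cdim f, cdim (inr e)),
      forall w, Yv (inr e) w = \sum_(f in in_edge e) Yv f w *m M f
}.
Arguments Yv l f _ : clear implicits.

Definition inputs (C : lincode) (u : V) (w : Omega (cdim C))
  : {dffun forall f : S + E, 'rV[F]_(cdim C f)} :=
  @finfun _ (fun f => 'rV[F]_(cdim C f))
    (fun f => if f \in in_node u then Yv C f w else 0).

Arguments inputs C u w : clear implicits.

Definition spcard (C : lincode) (f : S + E) : nat :=
  #|[set Yv C f w | w : Omega (cdim C)]%SET|.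

Definition zero_achievable_lin (lam : S -> R) (om : E -> R) : Prop :=
  exists (C : nat -> lincode) (c : nat -> R),
    (forall n, 0 < c n) /\
    (forall s, exists l : R,
        (fun n => c n * ln (spcard (C n) (inl s))%:R) @ \oo --> l /\ lam s <= l) /\
    (forall e, exists l : R,
        (fun n => c n * ln (spcard (C n) (inr e))%:R) @ \oo --> l /\ l <= om e) /\
    (forall n s u, u \in D s ->
        condH (Yv (C n) (inl s)) (inputs (C n) u) = 0).

(* h is q-representable: subspaces U_i (row spaces of d x d matrices) of F^d *)
Definition representable (h : {set S + E} -> R) : Prop :=
  exists (d : nat) (U : S + E -> 'M[F]_d),
    forall A : {set S + E}, h A = (\rank (\sum_(i in A) U i)%MS)%:R.

End Code.

Definition C_I (h : {set S + E} -> R) : Prop :=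
  h [set (inl s : S + E) | s : S]%SET = \sum_(s : S) h [set (inl s : S + E)]%SET.
Definition C_T (h : {set S + E} -> R) : Prop :=
  forall e : E, h (inr e |: in_edge e) - h (in_edge e) = 0.
Definition C_D (h : {set S + E} -> R) : Prop :=
  forall (s : S) (u : V), u \in D s -> h (inl s |: in_node u) - h (in_node u) = 0.

Definition proj_src (h : {set S + E} -> R) (s : S) : R := h [set (inl s : S + E)]%SET.
Definition proj_edge (h : {set S + E} -> R) (e : E) : R := h [set (inr e : S + E)]%SET.

End Network.

(* The subspaces U_i representing h yield a linear code directly.  C_I says the
   source subspaces form a direct sum, so one can choose a dual family that
   encodes the independent source messages (w_s)_s as a single vector x with
   x B_s^T = w_s, where B_s is a basis of U_s; every other symbol is then
   Y_f := x B_f^T.  C_T and C_D say U_e (resp. U_s) lies in the span of the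
   subspaces of in(e) (resp. in(u)), which makes Y_e a linear function of its
   inputs and Y_s a function of the inputs of every sink u in D(s).  Since Y_s is
   uniform on F^(dim U_s) and Y_e takes at most q^(dim U_e) values, the constant
   code sequence with normalisation 1/ln q achieves (proj_src h, proj_edge h). *)

From HB Require Import structures.
From mathcomp Require Import all_boot all_order all_algebra.
From mathcomp Require Import all_classical all_reals all_analysis.
From mathcomp Require Import Rstruct Rstruct_topology.
Set Implicit Arguments. Unset Strict Implicit. Unset Printing Implicit Defensive.
Import Order.TTheory GRing.Theory Num.Theory.
Local Open Scope ring_scope.

Lemma sumsmx_setU1_rank_sub (I : finType) (F : fieldType) (d : nat)
    (U : I -> 'M[F]_d) (i : I) (A : {set I}) :
  \rank (\sum_(j in i |: A) U j)%MS = \rank (\sum_(j in A) U j)%MS ->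
  (U i <= \sum_(j in A) U j)%MS.
Proof.
move=> eq_rank.
have sub_A : (\sum_(j in A) U j <= \sum_(j in i |: A) U j)%MS.
  by apply/sumsmx_subP => j Aj; apply: (sumsmx_sup j) => //; rewrite setU1r.
have := (mxrank_leqif_sup sub_A).2; rewrite eq_rank eqxx => /esym eq_sum.
by apply: submx_trans eq_sum; apply: (sumsmx_sup i) => //; rewrite setU11.
Qed.

Lemma mxdirect_dual_row_base (I : finType) (F : fieldType) (d : nat)
    (U : I -> 'M[F]_d) :
  mxdirect (\sum_i U i) ->
  forall t, exists T : 'M[F]_(d, \rank (U t)),
    row_base (U t) *m T = 1%:M /\
    forall s, s != t -> row_base (U s) *m T = 0.
Proof.
move=> dirU t; set W := (\sum_(j | j != t) U j)%MS.
have capUW : (U t :&: W = 0)%MS by have := mxdirect_sumsP dirU t isT.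
(* Killing W with its cokernel keeps the rows of row_base (U t) independent. *)
have : row_free (row_base (U t) *m cokermx W).
  rewrite -kermx_eq0; apply/eqP; set Z := kermx _.
  have Z0 : Z *m (row_base (U t) *m cokermx W) = 0 by apply/sub_kermxP.
  have subW : (Z *m row_base (U t) <= W)%MS by rewrite submxE -mulmxA Z0.
  have subU : (Z *m row_base (U t) <= U t)%MS.
    by apply: submx_trans (submxMl _ _) _; rewrite eq_row_base.
  have : (Z *m row_base (U t) <= U t :&: W)%MS by rewrite sub_capmx subW subU.
  rewrite capUW submx0 => /eqP ZB0.
  by apply: (row_free_inj (row_base_free (U t))); rewrite /= mul0mx.
case/row_freeP => X BX1; exists (cokermx W *m X); split; first by rewrite mulmxA.
move=> s neq_st; have : (row_base (U s) <= W)%MS.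
  by rewrite eq_row_base; apply: (sumsmx_sup s).
by rewrite submxE => /eqP BW0; rewrite mulmxA BW0 mul0mx.
Qed.

Lemma condH_eq0 (Om : finType) (A B : eqType) (X : Om -> A) (Y : Om -> B) :
  (forall w w', Y w' = Y w -> X w' = X w) -> condH X Y = 0.
Proof.
move=> XofY; rewrite /condH big1 // => w _.
set N := [set w' | Y w' == Y w]%SET.
have -> : [set w' | (X w' == X w) && (Y w' == Y w)]%SET = N.
  apply/setP => w'; rewrite !inE andb_idl // => /eqP /XofY ->; exact: eqxx.
have : (0 < #|N|)%N by apply/card_gt0P; exists w; rewrite inE.
by rewrite lt0n => N0; rewrite divff ?ln1 ?mulr0 // pnatr_eq0.
Qed.

Lemma logq_le_of_le_expn (q n k : nat) : (1 < q)%N -> (0 < n)%N -> (n <= q ^ k)%N ->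
  (ln (q%:R : R))^-1 * ln (n%:R : R) <= k%:R.
Proof.
move=> q1 n0 le_nq; have q0 : (0 : R) < q%:R by rewrite ltr0n ltnW.
have lnq : 0 < ln (q%:R : R) by apply: ln_gt0; rewrite ltr1n.
rewrite ler_pdivrMl // mulr_natr -lnXn // ler_ln ?posrE ?ltr0n ?exprn_gt0 //.
by rewrite -natrX ler_nat.
Qed.

Lemma rank_cond_eq0_sub (I : finType) (F : fieldType) (d : nat)
    (U : I -> 'M[F]_d) (h : {set I} -> R) (i : I) (A : {set I}) :
  (forall B, h B = (\rank (\sum_(j in B) U j)%MS)%:R) ->
  h (i |: A) - h A = 0 -> (U i <= \sum_(j in A) U j)%MS.
Proof.
move=> hU /eqP; rewrite subr_eq0 !hU eqr_nat => /eqP.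
exact: sumsmx_setU1_rank_sub.
Qed.

Lemma C_I_mxdirect (E S : finType) (F : fieldType) (d : nat)
    (U : S + E -> 'M[F]_d) (h : {set S + E} -> R) :
  (forall B, h B = (\rank (\sum_(j in B) U j)%MS)%:R) ->
  C_I h -> mxdirect (\sum_(s : S) U (inl s)).
Proof.
move=> hU; rewrite /C_I; under eq_bigr => s _ do rewrite hU big_set1.
rewrite hU big_imset /=; last by move=> a b _ _ [].
rewrite -natr_sum => /eqP; rewrite eqr_nat => /eqP eq_rank.
rewrite mxdirectE /= -eq_rank; apply/eqP.
by apply: congr1; apply: eq_bigl.
Qed.

Section RepresentableCode.
Variables (V E S : finType) (tail : E -> V) (head : E -> {set V})
  (O : S -> {set V}) (F : finFieldType) (d : nat) (U : S + E -> 'M[F]_d).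
Hypothesis dirU : mxdirect (\sum_(s : S) U (inl s)).

Definition dim (f : S + E) : nat := \rank (U f).

Definition src_dual t : 'M[F]_(d, dim (inl t)) :=
  projT1 (cid (mxdirect_dual_row_base dirU t)).

Lemma row_base_src_dual t : row_base (U (inl t)) *m src_dual t = 1%:M.
Proof. by have [] := projT2 (cid (mxdirect_dual_row_base dirU t)). Qed.

Lemma row_base_src_dual0 t s : s != t -> row_base (U (inl s)) *m src_dual t = 0.
Proof. by have [_] := projT2 (cid (mxdirect_dual_row_base dirU t)); apply. Qed.

Definition encode (w : Omega F dim) : 'rV[F]_d := \sum_t w t *m (src_dual t)^T.

Definition symbol (f : S + E) (w : Omega F dim) : 'rV[F]_(dim f) :=
  match f with
  | inl s => w s
  | inr e => encode w *m (row_base (U (inr e)))^T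
  end.

Lemma symbolE f w : symbol f w = encode w *m (row_base (U f))^T.
Proof.
case: f => [s|e] //=; rewrite /encode mulmx_suml (bigD1 s) //= big1 ?addr0.
  by rewrite -mulmxA -trmx_mul row_base_src_dual trmx1 mulmx1.
move=> t neq_ts.
by rewrite -mulmxA -trmx_mul row_base_src_dual0 1?eq_sym // trmx0 mulmx0.
Qed.

Lemma symbol_lin i (A : {set S + E}) : (U i <= \sum_(j in A) U j)%MS ->
  exists M : forall f, 'M[F]_(dim f, dim i),
    forall w, symbol i w = \sum_(f in A) symbol f w *m M f.
Proof.
move=> subUA; have : (row_base (U i) <= \sum_(j in A) U j)%MS.
  by rewrite eq_row_base.
case/sub_sumsmxP => u def_B.
exists (fun f => (u f *m U f *m pinvmx (row_base (U f)))^T) => w.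
rewrite symbolE def_B raddf_sum /= mulmx_sumr; apply: eq_bigr => f _.
rewrite symbolE -(mulmxA (encode w)) -trmx_mul mulmxKpV //.
by apply: submx_trans (submxMl _ _) _; rewrite eq_row_base.
Qed.

Hypothesis subU_in_edge :
  forall e, (U (inr e) <= \sum_(j in in_edge tail head O e) U j)%MS.

Definition representable_code : lincode tail head O F :=
  @LinCode _ _ _ tail head O F dim symbol (fun s w => erefl)
    (fun e => symbol_lin (subU_in_edge e)).

Lemma spcard_src s : spcard representable_code (inl s) = (#|F| ^ dim (inl s))%N.
Proof.
rewrite /spcard -[X in (_ ^ X)%N]mul1n -card_mx -cardsT.
apply: eq_card => v; rewrite inE; apply/imsetP.
exists [ffun t => v *m (src_dual s)^T *m (row_base (U (inl t)))^T] => //=.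
by rewrite ffunE -mulmxA -trmx_mul row_base_src_dual trmx1 mulmx1.
Qed.

Lemma spcard_edge_gt0 e : (0 < spcard representable_code (inr e))%N.
Proof. by apply/card_gt0P; exists (symbol (inr e) [ffun=> 0]); apply: imset_f. Qed.

Lemma spcard_edge_le e : (spcard representable_code (inr e) <= #|F| ^ dim (inr e))%N.
Proof. by rewrite -[X in (_ ^ X)%N]mul1n -card_mx; apply: max_card. Qed.

Lemma representable_code_decodes s u :
  (U (inl s) <= \sum_(j in in_node head O u) U j)%MS ->
  condH (Yv (l := representable_code) (inl s)) (inputs (C := representable_code) u)
  = 0.
Proof.
move=> /symbol_lin [M def_s]; apply: condH_eq0 => w w' eq_in.
rewrite [LHS](def_s w') [RHS](def_s w); apply: eq_bigr => f uf.
by move/ffunP/(_ f): eq_in; rewrite !ffunE uf /= => ->.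
Qed.

End RepresentableCode.

Theorem proposition4 (V E S : finType) (tail : E -> V) (head : E -> {set V})
  (O D : S -> {set V}) (Hacyc : acyclic tail head)
  (F : finFieldType) (h : {set S + E} -> R) :
  representable F h ->
  C_I h -> C_T tail head O h -> C_D head O D h ->
  zero_achievable_lin tail head O D F (proj_src h) (proj_edge h).
Proof.
move=> [d [U hU]] hI hT hD.
have dirU := C_I_mxdirect hU hI.
have subU_in e := rank_cond_eq0_sub hU (hT e).
set C := representable_code dirU subU_in.
have q1 : (1 < #|F|)%N by apply: card_finNzRing_gt1.
have lnq : 0 < ln (#|F|%:R : R) by apply: ln_gt0; rewrite ltr1n.
exists (fun=> C), (fun=> (ln (#|F|%:R : R))^-1).
split; first by move=> _; rewrite invr_gt0.
split.
  move=> s; eexists; split; first exact: cvg_cst.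
  rewrite /proj_src hU big_set1 spcard_src natrX lnXn ?ltr0n 1?ltnW //.
  by rewrite mulrnAr mulVf ?gt_eqF.
split.
  move=> e; eexists; split; first exact: cvg_cst.
  rewrite /proj_edge hU big_set1.
  exact: logq_le_of_le_expn q1 (spcard_edge_gt0 _ _ _) (spcard_edge_le _ _ _).
move=> _ s u Du; apply: representable_code_decodes.
exact: rank_cond_eq0_sub hU (hD s u Du).
Qed.
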